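(* For all integers $n\geq0$, \[ \sum_{j=0}^n\binom{2j}{j}\frac{O_j-H_{n-j}}{4^j(n+1-j)}=0. \]
   Context: $H_n=\sum_{j=1}^n\frac1j$ ($H_0=0$) and $O_n=\sum_{j=1}^n\frac1{2j-1}$ ($O_0=0$). *)

From mathcomp Require Import all_boot all_order all_algebra.
Set Implicit Arguments. Unset Strict Implicit. Unset Printing Implicit Defensive.
Import Order.TTheory GRing.Theory Num.Theory.
Local Open Scope ring_scope.

Definition H (n : nat) : rat := \sum_(1 <= j < n.+1) (j%:R)^-1.

Definition O (n : nat) : rat := \sum_(1 <= j < n.+1) ((2 * j - 1)%:R)^-1.

From mathcomp Require Import all_boot all_order all_algebra.
From mathcomp Require Import ring.
Import Order.TTheory GRing.Theory Num.Theory.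
Local Open Scope ring_scope.

(* Let A(x) = sum_j C(2j,j)/4^j x^j = (1-x)^(-1/2) and L(x) = sum_(k>0) x^k/k = -log(1-x).
   Multiplying the m-th coefficient by m (applying x d/dx) turns 2(1-x)A' = A and
   (1-x)L' = 1 into recurrences which show A L = 2 sum_j C(2j,j)/4^j O_j x^j and
   L^2 = 2 sum_m H_(m-1)/m x^m.  Comparing the coefficients of x^(n+1) in
   (A L) L = A (L L) gives the identity. *)

Section Convolution.

Variable R : nzRingType.
Implicit Types u v w : nat -> R.

Definition conv u v (m : nat) : R := \sum_(i < m.+1) u i * v (m - i)%N.

Lemma coefM_conv (p q : {poly R}) u v m :
    (forall i, (i <= m)%N -> p`_i = u i) -> (forall i, (i <= m)%N -> q`_i = v i) ->
  (p * q)`_m = conv u v m.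
Proof.
move=> pu qv; rewrite coefM; apply: eq_bigr => i _.
have le_im : (i <= m)%N by rewrite -ltnS.
by rewrite pu // qv ?leq_subr.
Qed.

Lemma convA u v w m : conv (conv u v) w m = conv u (conv v w) m.
Proof.
pose P (f : nat -> R) := \poly_(i < m.+1) f i.
have coefP (f : nat -> R) i : (i <= m)%N -> (P f)`_i = f i.
  by move=> le_im; rewrite coef_poly ltnS le_im.
have coefPP (f g : nat -> R) i : (i <= m)%N -> (P f * P g)`_i = conv f g i.
  by move=> le_im; apply: coefM_conv => k le_ki; apply: coefP; apply: leq_trans le_im.
have -> : conv (conv u v) w m = (P u * P v * P w)`_m.
  by symmetry; apply: coefM_conv => i; [exact: coefPP | exact: coefP].
have -> : conv u (conv v w) m = (P u * (P v * P w))`_m.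
  by symmetry; apply: coefM_conv => i; [exact: coefP | exact: coefPP].
by rewrite mulrA.
Qed.

End Convolution.

Arguments conv {R}.

(* Since 0^-1 = 0 in rat, inv_nat is exactly the coefficient sequence of L. *)
Definition inv_nat (k : nat) : rat := (k%:R)^-1.

Lemma inv_nat0 : inv_nat 0 = 0.
Proof. by rewrite /inv_nat invr0. Qed.

Lemma H_pred m : H m.-1 = \sum_(i < m) inv_nat i.
Proof.
case: m => [|m]; first by rewrite /H big_geq // big_ord0.
by rewrite big_ord_recl inv_nat0 add0r /H big_add1 big_mkord.
Qed.

Lemma O_S j : O j.+1 = O j + inv_nat j.*2.+1.
Proof. by rewrite /O big_nat_recr //= /inv_nat -mul2n mulnS add2n subn1. Qed.

Lemma natr_mul_conv_inv_nat (u : nat -> rat) m :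
  m%:R * conv u inv_nat m
    = \sum_(i < m.+1) i%:R * u i * inv_nat (m - i) + \sum_(i < m) u i.
Proof.
rewrite /conv mulr_sumr !big_ord_recr /= subnn inv_nat0 !mulr0 !addr0 -big_split /=.
apply: eq_bigr => i _; have lt_im := ltn_ord i.
have nz_mi : (m - i)%:R != 0 :> rat by rewrite pnatr_eq0 subn_eq0 -ltnNge.
rewrite -{1}(subnKC (ltnW lt_im)) natrD /inv_nat; field.
by rewrite nz_mi.
Qed.

Lemma conv_inv_nat m : conv inv_nat inv_nat m = 2 * H m.-1 * inv_nat m.
Proof.
case: m => [|m]; first by rewrite /conv big_ord1 inv_nat0 !mulr0.
apply: (@mulfI _ m.+1%:R); first by rewrite pnatr_eq0.
rewrite natr_mul_conv_inv_nat big_ord_recl mul0r add0r H_pred /=.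
rewrite (eq_bigr (fun i : 'I_m.+1 => inv_nat (m - i))); last first.
  by move=> i _; rewrite /bump /= add1n subSS /inv_nat mulfV ?mul1r ?pnatr_eq0.
rewrite (reindex_inj rev_ord_inj) /=.
rewrite (eq_bigr (fun i : 'I_m.+1 => inv_nat i)); last by move=> i _; rewrite subSS subKn // -ltnS.
by rewrite /inv_nat mulrCA mulfV ?pnatr_eq0 // mulr1 mulr_natl mulr2n.
Qed.

Lemma mul_bin_center j : (j.+1 * 'C(j.+1.*2, j.+1) = 2 * j.*2.+1 * 'C(j.*2, j))%N.
Proof.
have sym : 'C(j.*2.+1, j) = 'C(j.*2.+1, j.+1).
  by rewrite -(@bin_sub j.*2.+1 j.+1) -?addnn ?subSS ?addnK // ltnS leq_addr.
by rewrite doubleS -mul_bin_diag /= sym -doubleS -[j.+1.*2]mul2n -mulnA -mul_bin_diag mulnA.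
Qed.

Definition cbin4 (j : nat) : rat := 'C(j.*2, j)%:R / (4 ^ j)%:R.

Lemma cbin4S j : (j.+1).*2%:R * cbin4 j.+1 = j.*2.+1%:R * cbin4 j.
Proof.
have nzj : j.+1%:R != 0 :> rat by rewrite pnatr_eq0.
have nz4 : (4 ^ j)%:R != 0 :> rat by rewrite pnatr_eq0 expn_eq0.
have binS : 'C(j.+1.*2, j.+1)%:R = 2 * j.*2.+1%:R * 'C(j.*2, j)%:R / j.+1%:R :> rat.
  by rewrite -!natrM -mul_bin_center natrM mulrAC divff // mul1r.
rewrite /cbin4 binS expnS -mul2n !natrM.
by field; rewrite nz4 addrC natr1 nzj.
Qed.

Lemma conv_cbin4_inv_natS j :
  (j.+1).*2%:R * conv cbin4 inv_nat j.+1
    = j.*2.+1%:R * conv cbin4 inv_nat j + 2 * cbin4 j.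
Proof.
set c := conv cbin4 inv_nat.
set S := \sum_(i < j.+1) i%:R * cbin4 i * inv_nat (j - i).
have shift : 2 * \sum_(i < j.+2) i%:R * cbin4 i * inv_nat (j.+1 - i)
    = \sum_(i < j.+1) i.*2.+1%:R * cbin4 i * inv_nat (j - i).
  rewrite big_ord_recl mul0r add0r mulr_sumr; apply: eq_bigr => i _.
  by rewrite /= /bump /= add1n subSS -cbin4S -mul2n natrM !mulrA.
have odd_weights : \sum_(i < j.+1) i.*2.+1%:R * cbin4 i * inv_nat (j - i) = 2 * S + c j.
  rewrite mulr_sumr /c /conv -big_split /=; apply: eq_bigr => i _.
  by rewrite -[i.*2.+1%:R]natr1 -addnn natrD; ring.
rewrite -mul2n natrM -mulrA natr_mul_conv_inv_nat mulrDr shift odd_weights.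
have -> : S = j%:R * c j - \sum_(i < j) cbin4 i by rewrite natr_mul_conv_inv_nat addrK.
by rewrite big_ord_recr /= -[j.*2.+1%:R]natr1 -addnn natrD; ring.
Qed.

Lemma conv_cbin4_inv_nat j : conv cbin4 inv_nat j = 2 * cbin4 j * O j.
Proof.
elim: j => [|j IHj]; first by rewrite /conv big_ord1 inv_nat0 /O big_geq // !mulr0.
apply: (@mulfI _ (j.+1).*2%:R); first by rewrite pnatr_eq0.
rewrite conv_cbin4_inv_natS IHj O_S.
transitivity (2 * ((j.+1).*2%:R * cbin4 j.+1) * (O j + inv_nat j.*2.+1)); last by ring.
by rewrite cbin4S /inv_nat; field; rewrite addrC natr1 pnatr_eq0.
Qed.

Lemma conv_inv_natS (u : nat -> rat) m :
  conv u inv_nat m.+1 = \sum_(i < m.+1) u i * inv_nat (m.+1 - i).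
Proof. by rewrite /conv big_ord_recr /= subnn inv_nat0 mulr0 addr0. Qed.

Theorem corollary5 (n : nat) :
  \sum_(0 <= j < n.+1)
     ('C(2 * j, j))%:R * (O j - H (n - j)) / ((4 ^ j)%:R * ((n + 1 - j)%:R))
  = 0 :> rat.
Proof.
have lhs : conv (conv cbin4 inv_nat) inv_nat n.+1
    = 2 * \sum_(j < n.+1) cbin4 j * O j * inv_nat (n.+1 - j).
  rewrite conv_inv_natS mulr_sumr; apply: eq_bigr => j _.
  by rewrite conv_cbin4_inv_nat; ring.
have rhs : conv cbin4 (conv inv_nat inv_nat) n.+1
    = 2 * \sum_(j < n.+1) cbin4 j * H (n - j) * inv_nat (n.+1 - j).
  rewrite {1}/conv big_ord_recr /= subnn conv_inv_nat inv_nat0 !mulr0 addr0 mulr_sumr.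
  apply: eq_bigr => j _; rewrite conv_inv_nat subSn /=; last by rewrite -ltnS.
  ring.
have termE j : 'C(2 * j, j)%:R * (O j - H (n - j)) / ((4 ^ j)%:R * (n + 1 - j)%:R)
    = cbin4 j * O j * inv_nat (n.+1 - j) - cbin4 j * H (n - j) * inv_nat (n.+1 - j).
  by rewrite /cbin4 /inv_nat mul2n addn1 invfM; ring.
rewrite (eq_bigr _ (fun j _ => termE j)) sumrB !big_mkord; apply/eqP; rewrite subr_eq0.
by apply/eqP/(@mulfI _ 2) => //; rewrite -lhs -rhs convA.
Qed.
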